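(* For all integers $n\ge1$, $$\mathcal A\cap\gamma_{n+1}(\mathcal R)=\mathcal A_{2n-1}.$$
   Context: $\mathcal R=\mathcal R(\mathbb F_2)$ is the Riordan group of pairs $(g,f)$ of formal power series over $\mathbb F_2$ with $g=1+\cdots$, $f=t+\cdots$, product $(g_1,f_1)(g_2,f_2)=(g_1\cdot(g_2\circ f_1),\,f_2\circ f_1)$; it is a pro-2 group (inverse limit of its finite truncations) with the corresponding $t$-adic topology. $\mathcal A=\{(g,t)\}$ is the Appell subgroup and $\mathcal A_m=\{(g,t):g\equiv1\pmod{t^{m+1}}\}$. The lower central series is $\gamma_1(\mathcal R)=\mathcal R$, $\gamma_i(\mathcal R)=[\gamma_{i-1}(\mathcal R),\mathcal R]$, where $[X,Y]$ is the smallest closed subgroup containing all commutators $x^{-1}y^{-1}xy$, $x\in X$, $y\in Y$. *)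

From HB Require Import structures.
From mathcomp Require Import all_boot all_order all_algebra.
Set Implicit Arguments. Unset Strict Implicit. Unset Printing Implicit Defensive.
Import GRing.Theory.
Local Open Scope ring_scope.

Definition series := nat -> 'F_2.

Definition sone : series := fun n => (n == 0)%:R.
Definition st : series := fun n => (n == 1)%:R.

Definition smul (a b : series) : series :=
  fun n => \sum_(i < n.+1) a i * b (n - i)%N.

Fixpoint spow (f : series) (k : nat) : series :=
  match k with 0 => sone | k'.+1 => smul f (spow f k') end.

(* composition g o f, meaningful when f 0 = 0 *)
Definition scomp (g f : series) : series :=
  fun n => \sum_(k < n.+1) g k * spow f k n.

Definition rpair := (series * series)%type.

Definition isRiordan (x : rpair) : Prop :=
  x.1 0%N = 1 /\ x.2 0%N = 0 /\ x.2 1%N = 1.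

Definition rmul (x y : rpair) : rpair :=
  (smul x.1 (scomp y.1 x.2), scomp y.2 x.2).

Definition rid : rpair := (sone, st).

(* t-adic topology: x and y agree modulo t^N *)
Definition agree (N : nat) (x y : rpair) : Prop :=
  forall i, (i < N)%N -> x.1 i = y.1 i /\ x.2 i = y.2 i.

Definition rclosed (S : rpair -> Prop) : Prop :=
  forall x, isRiordan x -> (forall N, exists y, S y /\ agree N x y) -> S x.

Definition rsubgroup (H : rpair -> Prop) : Prop :=
  [/\ forall x, H x -> isRiordan x,
      H rid,
      forall x y, H x -> H y -> H (rmul x y) &
      forall x, H x -> exists z, H z /\ rmul x z = rid].

(* c is the commutator x^-1 y^-1 x y, i.e. the unique c with y x c = x y *)
Definition commset (X Y : rpair -> Prop) (c : rpair) : Prop :=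
  isRiordan c /\ exists x y, [/\ X x, Y y, isRiordan x, isRiordan y &
                                rmul y (rmul x c) = rmul x y].

Definition commgen (X Y : rpair -> Prop) (c : rpair) : Prop :=
  forall H, rsubgroup H -> rclosed H -> (forall d, commset X Y d -> H d) -> H c.

(* lcs k = gamma_{k+1}(R) *)
Fixpoint lcs (k : nat) : rpair -> Prop :=
  match k with 0 => isRiordan | k'.+1 => commgen (lcs k') isRiordan end.

Definition gamma (i : nat) : rpair -> Prop := lcs i.-1.

Definition isAppell (x : rpair) : Prop := isRiordan x /\ x.2 = st.

Definition appellm (m : nat) (x : rpair) : Prop :=
  isAppell x /\ forall i, (1 <= i <= m)%N -> x.1 i = 0.

From mathcomp Require Import all_boot all_order all_algebra.
From mathcomp Require Import zify.
From Stdlib Require Import FunctionalExtensionality.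
Set Implicit Arguments. Unset Strict Implicit. Unset Printing Implicit Defensive.
Import GRing.Theory.
Local Open Scope ring_scope.

(** For the upper bound, the pairs (g, f) with g = 1 (mod t^(2N))
   and f = t (mod t^(2N+2)) form a closed subgroup of R, and the commutator of
   such a pair with any Riordan pair lies in the analogous subgroup for N + 1;
   so gamma_(n+1)(R) lies in the subgroup for N = n.  The estimate behind this
   is that F = G (mod t^M) implies F^j = G^j (mod t^(M+j-1)), which improves to
   F^(2i) = G^(2i) (mod t^(2(M+i-1))) because squaring is additive over F_2.

   For the lower bound, let k = t + t^e with e >= 2 and m odd.  Then
   k^m = t^m + t^(m+e-1) (mod t^(m+e)), so the commutator of (1 + k^m, t), an
   element of A_(m-1), with (1, k) is an Appell pair (q, t) with
   q = 1 + t^(m+e-1) (mod t^(m+e)).  Taking e = 2 or 3 gives such elements in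
   every degree d >= 2n + 2 inside [A_(2n-1), R], and finite products of them
   approximate every element of A_(2n+1); closedness and induction on n give
   A_(2n-1) <= gamma_(n+1)(R). *)

(** * Formal power series over F_2 *)

Lemma F2_char2 : (2 \in [pchar 'F_2])%N.
Proof. exact: pchar_Fp. Qed.

Lemma F2_natr_odd m : (m%:R : 'F_2) = (odd m)%:R.
Proof. by rewrite -(Fp_nat_mod (p := 2)) // modn2. Qed.

Lemma F2_neq_add1 (x y : 'F_2) : x != y -> x + 1 = y.
Proof. by move: x y; do 2!case=> [[|[|?]] ?] //=; move=> _; apply/val_inj. Qed.

Definition sadd (a b : series) : series := fun n => a n + b n.
Definition szero : series := fun _ => 0.
Definition tpow (e : nat) : series := fun n => (n == e)%:R.

Definition eqmodt (V : nat) (a b : series) : Prop :=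
  forall i, (i < V)%N -> a i = b i.

Lemma series_ext (a b : series) : (forall n, a n = b n) -> a = b.
Proof. exact: functional_extensionality. Qed.

Lemma saddE a b n : sadd a b n = a n + b n.
Proof. by []. Qed.

Lemma saddC a b : sadd a b = sadd b a.
Proof. by apply: series_ext => n; rewrite /sadd addrC. Qed.

Lemma saddA a b c : sadd a (sadd b c) = sadd (sadd a b) c.
Proof. by apply: series_ext => n; rewrite /sadd addrA. Qed.

Lemma saddK a b : sadd a (sadd a b) = b.
Proof. by apply: series_ext => n; rewrite /sadd addrA addrr_pchar2 ?add0r // F2_char2. Qed.

Lemma sum_ord_single (R : nmodType) n m (F : nat -> R) :
  (forall k, (k < n)%N -> k != m -> F k = 0) ->
  \sum_(k < n) F k = if (m < n)%N then F m else 0.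
Proof.
move=> HF; rewrite -(big_ord1_eq +%R F) [RHS]big_mkcond; apply: eq_bigr => k _.
by case: eqP => // /eqP; apply: HF.
Qed.

Lemma sum_tpow n e (F : nat -> 'F_2) :
  \sum_(i < n) tpow e i * F i = if (e < n)%N then F e else 0.
Proof.
rewrite (sum_ord_single (F := fun i => tpow e i * F i) (m := e)) => [|k _ /negPf ke].
  by rewrite /tpow eqxx mul1r.
by rewrite /tpow ke mul0r.
Qed.

Section Congruence.

Variable V : nat.

Lemma eqmodt_sym a b : eqmodt V a b -> eqmodt V b a.
Proof. by move=> Hab i Hi; rewrite Hab. Qed.

Lemma eqmodt_trans a b c : eqmodt V a b -> eqmodt V b c -> eqmodt V a c.
Proof. by move=> Hab Hbc i Hi; rewrite Hab ?Hbc. Qed.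

Lemma eqmodtW W a b : eqmodt V a b -> (W <= V)%N -> eqmodt W a b.
Proof. by move=> Hab HW i Hi; apply: Hab; apply: leq_trans HW. Qed.

Lemma eqmodtD a a' b b' :
  eqmodt V a a' -> eqmodt V b b' -> eqmodt V (sadd a b) (sadd a' b').
Proof. by move=> Ha Hb i Hi; rewrite /sadd Ha ?Hb. Qed.

Lemma eqmodt_sadd0 a b : eqmodt V (sadd a b) szero <-> eqmodt V a b.
Proof.
split=> H i Hi; last by rewrite /sadd H // addrr_pchar2 // F2_char2.
rewrite -(addrK_pchar2 F2_char2 (b i) (a i)).
by have := H i Hi; rewrite saddE => ->; rewrite add0r.
Qed.

End Congruence.

Arguments eqmodtW {V W a b}.

Definition trunc (n : nat) (a : series) : {poly 'F_2} := \poly_(i < n.+1) a i.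

Lemma smul_trunc a b n i : (i <= n)%N -> smul a b i = (trunc n a * trunc n b)`_i.
Proof.
move=> Hi; rewrite coefM /smul; apply: eq_bigr => j _.
have Hj : (j < n.+1)%N by rewrite (leq_trans (ltn_ord j)) // ltnS.
by rewrite !coef_poly Hj ifT // ltnS (leq_trans (leq_subr _ _) Hi).
Qed.

Lemma coef_trunc_smul a b n i :
  (i <= n)%N -> (trunc n (smul a b))`_i = (trunc n a * trunc n b)`_i.
Proof. by move=> Hi; rewrite coef_poly ltnS Hi (smul_trunc _ _ Hi). Qed.

Lemma coefMl_agree (R : nzSemiRingType) (p q r : {poly R}) n :
  (forall i, (i <= n)%N -> p`_i = q`_i) -> (p * r)`_n = (q * r)`_n.
Proof. by move=> H; rewrite !coefM; apply: eq_bigr => j _; rewrite H // -ltnS. Qed.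

Lemma smulC a b : smul a b = smul b a.
Proof. by apply: series_ext => n; rewrite !(smul_trunc _ _ (leqnn n)) mulrC. Qed.

Lemma smulA a b c : smul a (smul b c) = smul (smul a b) c.
Proof.
apply: series_ext => n; rewrite !(smul_trunc _ _ (leqnn n)).
have Ebc := coefMl_agree (trunc n a) (coef_trunc_smul b c (n := n)).
have Eab := coefMl_agree (trunc n c) (coef_trunc_smul a b (n := n)).
by rewrite mulrC Ebc Eab [in LHS]mulrC mulrA.
Qed.

Lemma smulDl a b c : smul (sadd a b) c = sadd (smul a c) (smul b c).
Proof.
apply: series_ext => n; rewrite /smul /sadd -big_split /=.
by apply: eq_bigr => i _; rewrite mulrDl.
Qed.

Lemma smulDr a b c : smul c (sadd a b) = sadd (smul c a) (smul c b).
Proof. by rewrite smulC smulDl !(smulC c). Qed.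

Lemma smul_tpowl e a n :
  smul (tpow e) a n = if (e <= n)%N then a (n - e)%N else 0.
Proof. by rewrite /smul (sum_tpow n.+1 e (fun i => a (n - i)%N)). Qed.

Lemma smul1l a : smul sone a = a.
Proof. by apply: series_ext => n; rewrite (smul_tpowl 0) subn0. Qed.

Lemma smul1r a : smul a sone = a.
Proof. by rewrite smulC smul1l. Qed.

Lemma smul_at0 a b : smul a b 0%N = a 0%N * b 0%N.
Proof. by rewrite /smul big_ord1. Qed.

Lemma eqmodt_mull A B c a b :
  eqmodt A c szero -> eqmodt B a b -> eqmodt (A + B) (smul c a) (smul c b).
Proof.
move=> Hc Hab i Hi; apply: eq_bigr => k _.
case: (ltnP k A) => HkA; first by rewrite Hc // !mul0r.
by rewrite Hab //; have := ltn_ord k; lia.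
Qed.

Lemma eqmodtMl V c a b : eqmodt V a b -> eqmodt V (smul c a) (smul c b).
Proof. exact: (eqmodt_mull (A := 0)). Qed.

Lemma eqmodt_mul0 A B a b :
  eqmodt A a szero -> eqmodt B b szero -> eqmodt (A + B) (smul a b) szero.
Proof.
move=> Ha /(eqmodt_mull Ha) Hab i /Hab ->.
by apply: big1 => k _; rewrite mulr0.
Qed.

Lemma smul_lead A B a b : eqmodt A a szero -> eqmodt B b szero ->
  smul a b (A + B) = a A * b B.
Proof.
move=> Ha Hb; rewrite /smul (sum_ord_single (F := fun k => a k * b (A + B - k)%N) (m := A)).
  by rewrite ltnS leq_addr addKn.
move=> k Hk HkA; case: (ltnP k A) => HkA'; first by rewrite Ha // mul0r.
by rewrite Hb ?mulr0 //; move: HkA'; rewrite leq_eqVlt eq_sym (negPf HkA); lia.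
Qed.

Lemma spow_vanish F j : F 0%N = 0 -> eqmodt j (spow F j) szero.
Proof.
move=> F0; elim: j => [|j IH] //=.
by apply: (eqmodt_mul0 (A := 1)) => // i; rewrite ltnS leqn0 => /eqP ->.
Qed.

Lemma spow_lead F j : F 0%N = 0 -> F 1%N = 1 -> spow F j j = 1.
Proof.
move=> F0 F1; elim: j => [//|j IH] /=.
rewrite -[j.+1]/(1 + j)%N (smul_lead (A := 1) (B := j)) ?F1 ?IH ?mul1r //.
  by move=> i; rewrite ltnS leqn0 => /eqP ->.
exact: spow_vanish.
Qed.

Lemma spowD F i j : spow F (i + j) = smul (spow F i) (spow F j).
Proof. by elim: i => [|i IH] /=; rewrite ?smul1l // IH smulA. Qed.

Lemma spow_st k : spow st k = tpow k.
Proof.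
elim: k => [//|k IH] /=; rewrite IH; apply: series_ext => n.
by rewrite (smul_tpowl 1); case: n => [|n] //=; rewrite subn1.
Qed.

Lemma scompDl a b F : scomp (sadd a b) F = sadd (scomp a F) (scomp b F).
Proof.
apply: series_ext => n; rewrite /scomp /sadd -big_split /=.
by apply: eq_bigr => i _; rewrite mulrDl.
Qed.

Lemma scomp_tpow m F : F 0%N = 0 -> scomp (tpow m) F = spow F m.
Proof.
move=> F0; apply: series_ext => n.
rewrite /scomp (sum_tpow n.+1 m (fun k => spow F k n)) ltnS.
by case: leqP => // Hnm; rewrite spow_vanish.
Qed.

Lemma scomp_one F : F 0%N = 0 -> scomp sone F = sone.
Proof. exact: (scomp_tpow 0). Qed.

Lemma scomp_t F : F 0%N = 0 -> scomp st F = F.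
Proof. by move=> F0; rewrite (scomp_tpow 1 F0) /= smul1r. Qed.

Lemma scomp_st a : scomp a st = a.
Proof.
apply: series_ext => n; rewrite /scomp.
under eq_bigr => k _ do rewrite spow_st mulrC /tpow eq_sym.
by rewrite (sum_tpow n.+1 n a) ltnSn.
Qed.

Lemma scomp_at0 a F : scomp a F 0%N = a 0%N.
Proof. by rewrite /scomp big_ord1 /= mulr1. Qed.

Lemma eqmodt_scompl V a b F : eqmodt V a b -> eqmodt V (scomp a F) (scomp b F).
Proof.
move=> Hab i Hi; apply: eq_bigr => k _; rewrite Hab //.
by apply: leq_ltn_trans Hi; rewrite -ltnS.
Qed.

Lemma eqmodt_scompr V a F G :
  (forall j, a j = 0 \/ eqmodt V (spow F j) (spow G j)) ->
  eqmodt V (scomp a F) (scomp a G).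
Proof.
move=> H i Hi; apply: eq_bigr => j _.
by case: (H j) => [->|HFG]; rewrite ?mul0r // HFG.
Qed.

Section Unitriangular.

Variable c : nat -> nat -> 'F_2.

Definition unitri (a : series) : series :=
  fun i => \sum_(j < i) a j * c i j + a i.

Fixpoint unitri_sol (w : series) (m : nat) : series :=
  match m with
  | 0 => szero
  | m'.+1 => fun i =>
      if i == m' then w m' - \sum_(j < m') unitri_sol w m' j * c m' j
      else unitri_sol w m' i
  end.

Lemma unitri_solE w m i : (i < m)%N -> unitri_sol w m i = unitri_sol w i.+1 i.
Proof.
elim: m => [//|m IH]; rewrite ltnS leq_eqVlt => /orP[/eqP->|Him] /=.
  by rewrite eqxx.
by rewrite ifN_eq ?IH // ltn_eqF.
Qed.

Lemma unitri_surj w : exists a, unitri a = w.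
Proof.
have solE i : unitri_sol w i.+1 i = w i - \sum_(j < i) unitri_sol w i j * c i j.
  by rewrite /= eqxx.
exists (fun i => unitri_sol w i.+1 i); apply: series_ext => i; rewrite /unitri solE.
rewrite (eq_bigr (fun j : 'I_i => unitri_sol w i j * c i j)) => [|j _].
  by rewrite addrC subrK.
by rewrite unitri_solE.
Qed.

Lemma eqmodt_unitri V a b : eqmodt V (unitri a) (unitri b) -> eqmodt V a b.
Proof.
elim: V => [//|V IH] Hab; have abV := IH (eqmodtW Hab (leqnSn V)).
move=> i; rewrite ltnS leq_eqVlt => /orP[/eqP->|/abV //].
have sumE : \sum_(j < V) a j * c V j = \sum_(j < V) b j * c V j.
  by apply: eq_bigr => j _; rewrite abV.
by have := Hab V (ltnSn V); rewrite /unitri sumE => /addrI.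
Qed.

End Unitriangular.

Lemma smul_unitri u a : u 0%N = 1 -> smul u a = unitri (fun i j => u (i - j)%N) a.
Proof.
move=> u0; apply: series_ext => i.
by rewrite smulC /smul big_ord_recr /= subnn u0 mulr1.
Qed.

Lemma scomp_unitri F a : F 0%N = 0 -> F 1%N = 1 ->
  scomp a F = unitri (fun i j => spow F j i) a.
Proof.
move=> F0 F1; apply: series_ext => i.
by rewrite /scomp big_ord_recr /= spow_lead // mulr1.
Qed.

Lemma smul_surj u w : u 0%N = 1 -> exists a, smul u a = w.
Proof.
move=> u0; have [a <-] := unitri_surj (fun i j => u (i - j)%N) w.
by exists a; rewrite smul_unitri.
Qed.

Lemma scomp_surj F w : F 0%N = 0 -> F 1%N = 1 -> exists a, scomp a F = w.
Proof.
move=> F0 F1; have [a <-] := unitri_surj (fun i j => spow F j i) w.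
by exists a; rewrite scomp_unitri.
Qed.

Lemma eqmodt_smul2l V u a b : u 0%N = 1 ->
  eqmodt V (smul u a) (smul u b) -> eqmodt V a b.
Proof. by move=> u0; rewrite !smul_unitri //; apply: eqmodt_unitri. Qed.

Lemma eqmodt_scomp2r V F a b : F 0%N = 0 -> F 1%N = 1 ->
  eqmodt V (scomp a F) (scomp b F) -> eqmodt V a b.
Proof. by move=> F0 F1; rewrite !scomp_unitri //; apply: eqmodt_unitri. Qed.

Lemma sqr_sadd a b : smul (sadd a b) (sadd a b) = sadd (smul a a) (smul b b).
Proof.
rewrite smulDl !smulDr (smulC b a); apply: series_ext => n; rewrite /sadd.
by rewrite -!addrA (addrA (smul a b n)) (addrr_pchar2 F2_char2) add0r.
Qed.

Lemma eqmodt_sqr V a b : eqmodt V a b -> eqmodt (V + V) (smul a a) (smul b b).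
Proof.
by move=> /eqmodt_sadd0 ab; apply/eqmodt_sadd0; rewrite -sqr_sadd; apply: eqmodt_mul0.
Qed.

Section PowerCongruence.

Variables (M : nat) (F G : series).
Hypotheses (G0 : G 0%N = 0) (M_gt0 : (0 < M)%N) (FG : eqmodt M F G).

Lemma eqmodt_spow j : eqmodt (M + j - 1) (spow F j) (spow G j).
Proof.
have F0 : F 0%N = 0 by rewrite FG.
have F_vanish : eqmodt 1 F szero by move=> i; rewrite ltnS leqn0 => /eqP ->.
elim: j => [//|j IH] /=; apply: (eqmodt_trans (b := smul F (spow G j))).
  by apply: (eqmodtW (eqmodt_mull F_vanish IH)); lia.
rewrite smulC [smul G _]smulC.
by apply: (eqmodtW (eqmodt_mull (spow_vanish (j := j) G0) FG)); lia.
Qed.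

(* Over F_2 the square of F - G is F^2 - G^2, which doubles the precision at even powers. *)
Lemma eqmodt_spow_double i :
  eqmodt ((M + i - 1) + (M + i - 1)) (spow F (i + i)) (spow G (i + i)).
Proof. by rewrite !spowD; apply/eqmodt_sqr/eqmodt_spow. Qed.

Lemma eqmodt_scomp_pow (s : series) J V :
  (forall j, (0 < j < J)%N -> s j = 0) ->
  (forall i, (0 < i)%N -> (J <= i + i)%N -> (V <= (M + i - 1) + (M + i - 1))%N) ->
  (forall i, (J <= (i + i).+1)%N -> (V <= M + i + i)%N) ->
  eqmodt V (scomp s F) (scomp s G).
Proof.
move=> sJ Veven Vodd; apply: eqmodt_scompr => j.
case: (ltnP j J) => [jJ|Jj]; first by case: j jJ => [|j] jJ; [right | left; apply: sJ].
right; move: Jj; have := odd_double_half j; rewrite -addnn; move: j./2 => k.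
case: (odd j) => /= <- Jj.
  by apply: (eqmodtW (eqmodt_spow (j := 1 + (k + k)))); have := Vodd k Jj; lia.
case: (posnP k) => [-> //|k_gt0].
exact: (eqmodtW (eqmodt_spow_double (i := k)) (Veven k k_gt0 Jj)).
Qed.

End PowerCongruence.

Lemma eqmodt_scomp_st M F (s : series) J V :
  (0 < M)%N -> eqmodt M F st ->
  (forall j, (0 < j < J)%N -> s j = 0) ->
  (forall i, (0 < i)%N -> (J <= i + i)%N -> (V <= (M + i - 1) + (M + i - 1))%N) ->
  (forall i, (J <= (i + i).+1)%N -> (V <= M + i + i)%N) ->
  eqmodt V (scomp s F) s.
Proof.
move=> M_gt0 Ft sJ Veven Vodd; rewrite -{2}(scomp_st s).
exact: (eqmodt_scomp_pow (erefl : st 0%N = 0) M_gt0 Ft sJ Veven Vodd).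
Qed.

(** * Congruence subgroups and the upper bound *)

Lemma isRiordanP x : isRiordan x <-> x.1 0%N = 1 /\ eqmodt 2 x.2 st.
Proof.
split=> [[g0 [f0 f1]]|[g0 ft]]; last by split=> //; split; apply: ft.
by split=> // -[|[|i]].
Qed.

Definition riordan_cong (A B : nat) (x : rpair) : Prop :=
  [/\ isRiordan x, eqmodt A x.1 sone & eqmodt B x.2 st].

Lemma riordan_cong_subgroup A B : (2 <= B)%N -> rsubgroup (riordan_cong A B).
Proof.
move=> B_ge2; split; first by move=> x [].
- by split=> //; split.
- move=> [g1 f1] [g2 f2] [/isRiordanP[/= g10 f1t] g1E f1E] [/isRiordanP[/= g20 f2t] g2E f2E].
  have f10 : f1 0%N = 0 by rewrite f1t.
  have fE : eqmodt B (scomp f2 f1) st.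
    by apply: (eqmodt_trans (eqmodt_scompl f1 f2E)); rewrite scomp_t.
  have gE : eqmodt A (smul g1 (scomp g2 f1)) sone.
    apply: (eqmodt_trans (eqmodtMl g1 (eqmodt_scompl f1 g2E))).
    by rewrite scomp_one // smul1r.
  split=> //; apply/isRiordanP; split; last exact: (eqmodtW fE).
  by rewrite /= smul_at0 scomp_at0 g10 g20 mulr1.
- move=> [g f] [/isRiordanP[/= g0 ft] gE fE].
  have [f0 f1] : f 0%N = 0 /\ f 1%N = 1 by rewrite !ft.
  have [k kf] := scomp_surj st f0 f1.
  have [u gu] := smul_surj sone g0.
  have [h hf] := scomp_surj u f0 f1.
  have u0 : u 0%N = 1 by have := congr1 (fun s => s 0%N) gu; rewrite /= smul_at0 g0 mul1r.
  have kE : eqmodt B k st.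
    by apply: (eqmodt_scomp2r f0 f1); rewrite kf scomp_t //; apply: eqmodt_sym.
  have uE : eqmodt A u sone.
    by apply: (eqmodt_smul2l g0); rewrite gu smul1r; apply: eqmodt_sym.
  have hE : eqmodt A h sone.
    by apply: (eqmodt_scomp2r f0 f1); rewrite hf scomp_one.
  exists (h, k); split; last by rewrite /rmul /= hf gu kf.
  split=> //; apply/isRiordanP; split; last exact: (eqmodtW kE).
  by rewrite /= -(scomp_at0 h f) hf.
Qed.

Lemma riordan_cong_closed A B : rclosed (riordan_cong A B).
Proof.
move=> x Rx approx; split=> // i Hi.
  by have [y [[_ y1 _] xy]] := approx i.+1; rewrite (xy i (ltnSn i)).1 y1.
by have [y [[_ _ y2] xy]] := approx i.+1; rewrite (xy i (ltnSn i)).2 y2.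
Qed.

Lemma commutator_riordan_cong N x y c :
  riordan_cong (2 * N) (2 * N + 2) x -> isRiordan y -> isRiordan c ->
  rmul y (rmul x c) = rmul x y -> riordan_cong (2 * N + 2) (2 * N + 4) c.
Proof.
case: x => g f; case: y => h k; case: c => q r.
move=> [/isRiordanP[/= g0 ft] gE fE] /isRiordanP[/= h0 kt] Rc [/= E1 E2].
have [f0 f1] : f 0%N = 0 /\ f 1%N = 1 by rewrite !ft.
have [k0 k1] : k 0%N = 0 /\ k 1%N = 1 by rewrite !kt.
split=> //=.
- have gk : eqmodt (2 * N + 2) (scomp g k) g.
    apply: (eqmodt_scomp_st (J := 2 * N) _ kt) => //.
    + by move=> j /andP[j_gt0 jN]; rewrite gE // /sone gtn_eqF.
    + by move=> i; lia.
    + by move=> i; lia.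
  have hf : eqmodt (2 * N + 2) (scomp h f) h.
    by apply: (eqmodt_scomp_st (J := 1) _ fE) => [||i|i]; lia.
  (* Modulo t^(2N+2): h ((g (q o f)) o k) = g (h o f) = g h = h (g o k); then
     cancel h, k, g and f in turn. *)
  have : eqmodt (2 * N + 2) (smul h (scomp (smul g (scomp q f)) k)) (smul h (scomp g k)).
    rewrite E1; apply: (eqmodt_trans (eqmodtMl g hf)).
    by rewrite smulC; apply: eqmodtMl; apply: eqmodt_sym.
  move=> /(eqmodt_smul2l h0) /(eqmodt_scomp2r k0 k1) gqf.
  apply: (eqmodt_scomp2r f0 f1); rewrite (scomp_one f0).
  by apply: (eqmodt_smul2l g0); rewrite smul1r.
- (* Modulo t^(2N+4): f o k = k + phi o k = k + phi and k o f = f + kappa o f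
     = f + kappa, and both right-hand sides equal f + k + t. *)
  set phi := sadd f st; set kappa := sadd k st.
  have phi0 : eqmodt (2 * N + 2) phi szero by apply/eqmodt_sadd0.
  have kappa0 : eqmodt 2 kappa szero by apply/eqmodt_sadd0.
  have fk : eqmodt (2 * N + 4) (scomp f k) (sadd k phi).
    rewrite -{1}(saddK st f) (saddC st f) scompDl scomp_t //.
    apply: eqmodtD => //; apply: (eqmodt_scomp_st (J := 2 * N + 2) _ kt) => //.
    + by move=> j /andP[_ jN]; apply: phi0.
    + by move=> i; lia.
    + by move=> i; lia.
  have kf : eqmodt (2 * N + 4) (scomp k f) (sadd f kappa).
    rewrite -{1}(saddK st k) (saddC st k) scompDl scomp_t //.
    apply: eqmodtD => //; apply: (eqmodt_scomp_st (J := 2) _ fE).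
    + by lia.
    + by move=> j /andP[_ j2]; apply: kappa0.
    + by move=> i; lia.
    + by move=> i; lia.
  apply: (eqmodt_scomp2r f0 f1); rewrite scomp_t //; apply: (eqmodt_scomp2r k0 k1).
  rewrite E2; apply: (eqmodt_trans kf); apply: eqmodt_sym.
  by rewrite /phi /kappa saddA (saddC k f) -saddA in fk.
Qed.

Lemma lcs_sub_riordan_cong n x : lcs n x -> riordan_cong (2 * n) (2 * n + 2) x.
Proof.
elim: n x => [|n IH] x /=; first by move=> Rx; split=> //; case/isRiordanP: Rx.
have -> : (2 * n.+1 = 2 * n + 2)%N by lia.
have -> : (2 * n + 2 + 2 = 2 * n + 4)%N by lia.
move=> Hx; apply: (Hx (riordan_cong _ _)).
- by apply: riordan_cong_subgroup; lia.
- exact: riordan_cong_closed.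
move=> c [Rc [x' [y [/IH Hx' _ _ Ry E]]]].
exact: commutator_riordan_cong Hx' Ry Rc E.
Qed.

(** * Appell commutators and the lower bound *)

Lemma coef_spow_t_add_tpow e m i : (2 <= e)%N -> (i < m + e)%N ->
  spow (sadd st (tpow e)) m i = tpow m i + m%:R * tpow (m + e - 1) i.
Proof.
move=> e_ge2; elim: m i => [|m IH] i lt_i /=; first by rewrite mul0r addr0.
rewrite smulDl saddE -/(tpow 1) !smul_tpowl.
have -> : (m.+1 + e - 1 = m + e)%N by lia.
case: i lt_i => [|i] lt_i.
  have e_neq0 : (e == 0%N) = false by rewrite gtn_eqF //; lia.
  have me_neq0 : (0 == m + e)%N = false by rewrite eq_sym gtn_eqF //; lia.
  by rewrite /= leqn0 e_neq0 /tpow /= me_neq0 mulr0 !addr0.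
rewrite subn1 /= IH; last by lia.
have tpowS j : tpow j.+1 i.+1 = tpow j i by [].
rewrite -(tpowS m) -(tpowS (m + e - 1)%N) (_ : (m + e - 1).+1 = m + e)%N; last by lia.
case: leqP => [le_e|lt_i_e]; last first.
  by rewrite [tpow (m + e) _](_ : _ = 0) ?mulr0 ?addr0 // /tpow ltn_eqF //; lia.
rewrite IH; last by lia.
rewrite [tpow (m + e - 1) _](_ : _ = 0) ?mulr0 ?addr0; last first.
  by rewrite /tpow ltn_eqF //; lia.
rewrite [tpow m _](_ : _ = tpow (m + e) i.+1); last first.
  by rewrite /tpow; congr (_%:R); apply/eqP/eqP; lia.
by rewrite mulrSr mulrDl mul1r !addrA.
Qed.

Lemma appellm_le a b x : (b <= a)%N -> appellm a x -> appellm b x.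
Proof.
move=> ba [Ax x0]; split=> // i /andP[i_gt0 i_le].
by apply: x0; rewrite i_gt0 (leq_trans i_le).
Qed.

Lemma commset_sub (X X' Y : rpair -> Prop) c :
  (forall x, X x -> X' x) -> commset X Y c -> commset X' Y c.
Proof. by move=> XX' [Rc [x [y [/XX' Xx Yy Rx Ry E]]]]; split=> //; exists x, y. Qed.

(* The commutator of (1 + k^m, t) with (1, k), for k = t + t^e. *)
Lemma commutator_appell_tpow m e : (2 <= e)%N -> odd m ->
  exists q, commset (appellm m.-1) isRiordan (q, st) /\
            eqmodt (m + e) q (sadd sone (tpow (m + e - 1))).
Proof.
move=> e_ge2 m_odd; have m_gt0 : (0 < m)%N by case: m m_odd.
set k := sadd st (tpow e); set d := (m + e - 1)%N.
have k0 : k 0%N = 0 by rewrite /k saddE /tpow eq_sym gtn_eqF ?addr0 //; exact: ltnW.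
have k1 : k 1%N = 1 by rewrite /k saddE /tpow eq_sym gtn_eqF ?addr0.
set w := sadd sone (tpow m); set hh := sadd sone (spow k m).
have whh : scomp w k = hh by rewrite scompDl scomp_one // scomp_tpow.
have hh0 : hh 0%N = 1 by rewrite /hh saddE spow_vanish ?addr0.
have [q hq] := smul_surj w hh0.
exists q; split.
  split.
    apply/isRiordanP; split=> //=.
    have := congr1 (fun s => s 0%N) hq; rewrite /= smul_at0 hh0 mul1r => ->.
    by rewrite /w saddE /tpow eq_sym gtn_eqF ?addr0.
  exists (hh, st), (sone, k); split.
  - split; first by split=> //; split.
    move=> i /andP[i_gt0 i_lt]; rewrite /= /hh saddE (spow_vanish k0); last by lia.
    by rewrite /sone gtn_eqF // addr0.
  - by split=> //; split.
  - by split=> //; split.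
  - by split=> //; split.
  - by rewrite /rmul /= !scomp_st hq whh (scomp_t k0) smul1l smul1r.
have hhE j : (j < m + e)%N -> hh j = sone j + tpow m j + tpow d j.
  move=> lt_j; rewrite /hh saddE (coef_spow_t_add_tpow e_ge2 lt_j).
  by rewrite F2_natr_odd m_odd mul1r addrA.
apply: (eqmodt_smul2l hh0); rewrite hq => i lt_i.
rewrite smulDr smul1r saddE smulC smul_tpowl (hhE i lt_i) /w saddE.
case: leqP => [le_d|lt_d].
  have -> : i = d by lia.
  by rewrite subnn hh0 /tpow eqxx -addrA (addrr_pchar2 F2_char2) addr0.
by rewrite /tpow (ltn_eqF lt_d) !addr0.
Qed.

Lemma commutator_appell_deg d : (2 <= d)%N ->
  exists q, commset (appellm (d - 3)) isRiordan (q, st) /\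
            eqmodt d.+1 q (sadd sone (tpow d)).
Proof.
move=> d_ge2.
have [m [e [e23 m_odd me_d]]] :
    exists m e, [/\ (2 <= e <= 3)%N, odd m & (m + e)%N = d.+1].
  case: (boolP (odd d)) => d_odd.
    by exists (d - 2)%N, 3%N; split; [|rewrite oddB ?d_odd|lia].
  by exists (d - 1)%N, 2%N; split; [|rewrite oddB ?(negPf d_odd) // ltnW|lia].
have [|q [Hc Hq]] := @commutator_appell_tpow m e _ m_odd; first by case/andP: e23.
exists q; split.
  by apply: commset_sub Hc => x; apply: appellm_le; lia.
by move: Hq; rewrite me_d (_ : d.+1 - 1 = d)%N //; lia.
Qed.

Lemma appellm_sub_closed_subgroup D (H : rpair -> Prop) :
  rsubgroup H -> rclosed H ->
  (forall d, (D < d)%N -> exists q, H (q, st) /\ eqmodt d.+1 q (sadd sone (tpow d))) ->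
  forall x, appellm D x -> H x.
Proof.
move=> [_ Hid Hmul _] Hcl Hgen [g f] [[/isRiordanP[/= g0 _] /= ->] gD].
have approx N : exists p, H (p, st) /\ eqmodt N p g.
  elim: N => [|N [p [Hp pg]]]; first by exists sone.
  case: (leqP N D) => [le_ND|lt_DN].
    exists sone; split=> // -[|i] lt_i; first by rewrite g0.
    by rewrite gD //; lia.
  case: (eqVneq (p N) (g N)) => [pgN|pgN].
    by exists p; split=> // i; rewrite ltnS leq_eqVlt => /orP[/eqP -> //|]; apply: pg.
  (* Multiplying by q = 1 + t^N (mod t^(N+1)) flips the N-th coefficient of p
     and keeps the lower ones. *)
  have [q [Hq qN]] := Hgen N lt_DN.
  exists (smul p q); split; first by have := Hmul _ _ Hp Hq; rewrite /rmul /= !scomp_st.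
  apply: (eqmodt_trans (eqmodtMl p qN)); rewrite smulDr smul1r => i.
  rewrite ltnS leq_eqVlt saddE smulC smul_tpowl => /orP[/eqP ->|lt_iN].
    by rewrite leqnn subnn (pg 0%N) ?g0; [apply: F2_neq_add1 | lia].
  by rewrite leqNgt lt_iN addr0 pg.
apply: Hcl => [|N]; first by apply/isRiordanP.
by have [p [Hp pg]] := approx N; exists (p, st); split=> // i lt_i; rewrite /= pg.
Qed.

Lemma appellm_sub_lcs n x : appellm (2 * n - 1) x -> lcs n x.
Proof.
elim: n x => [|n IH] x; first by case=> -[].
move=> Ax H Hsub Hcl Hcomm.
apply: (appellm_sub_closed_subgroup (D := 2 * n + 1) Hsub Hcl); last first.
  by apply: appellm_le Ax; lia.
move=> d lt_d; have [|q [Hc Hq]] := @commutator_appell_deg d; first lia.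
exists q; split=> //; apply: Hcomm; apply: commset_sub Hc => y Ay.
by apply: IH; apply: appellm_le Ay; lia.
Qed.

Theorem lemma10 (n : nat) : (1 <= n)%N ->
  forall x : rpair, (isAppell x /\ gamma n.+1 x) <-> appellm (2 * n - 1) x.
Proof.
move=> _ x; split=> [[Ax /lcs_sub_riordan_cong[_ x1 _]]|Ax].
  split=> // i /andP[i_gt0 i_lt]; rewrite x1; last by lia.
  by rewrite /sone gtn_eqF.
by split; [case: Ax | exact: appellm_sub_lcs].
Qed.
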